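(* Let $S\subset\mathbb{Z}^d$ be finite and even, and let $\{\mathcal{S}_u\}_{u\in\partial_\bullet S}$ be subsets of $\mathcal{S}$. Let $\mathcal{F}\subset\mathcal{S}^S$ be such that $f(u)\in\mathcal{S}_u$ for every $f\in\mathcal{F}$ and $u\in\partial_\bullet S$. Let $f$ be a random element of $\mathcal{F}$ chosen with probability proportional to $\omega_f$. For each odd vertex $v\in S$, let $X_v$ be a random variable measurable with respect to $f|_{N(v)}$. Then \[ \omega(\mathcal{F})\le\prod_{v\in S\text{ odd}}\ \prod_x\left[\frac{Z(\Psi_{v,x},I_{v,x})}{\mathbb{P}(X_v=x)}\right]^{\frac{1}{2d}\mathbb{P}(X_v=x)}\cdot\prod_{u\in\partial_\bullet S}(\lambda_{\mathcal{S}_u})^{\frac{1}{2d}|\partial u\cap\partial S|}, \] where the inner product is over $x$ in the support of $X_v$, and $\Psi_{v,x}$ and $I_{v,x}$ are the supports of $f|_{N(v)}$ and of $f(v)$, respectively, on the event $\{X_v=x\}$.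
   Context: A spin system: finite set $\mathcal{S}$, activities $\lambda_i>0$, symmetric pair interactions $\lambda_{i,j}\ge0$. For $f:S\to\mathcal{S}$, $\omega_f=\prod_{v\in S}\lambda_{f(v)}\prod_{\{u,v\}\in E(S)}\lambda_{f(u),f(v)}$ where $E(S)$ is the set of nearest-neighbour edges of $\mathbb{Z}^d$ with both endpoints in $S$; $\omega(\mathcal{F})=\sum_{f\in\mathcal{F}}\omega_f$; $\lambda_I=\sum_{i\in I}\lambda_i$. A vertex is even/odd according to the parity of its coordinate sum. $N(v)$ is the set of $2d$ neighbours of $v$; $\partial_\bullet S$ is the set of vertices of $S$ with a neighbour outside $S$; $S$ is even if $\partial_\bullet S$ consists of even vertices (so $N(v)\subset S$ for odd $v\in S$). $\partial u$ is the set of edges incident to $u$ and $\partial S$ the set of edges with exactly one endpoint in $S$. For a set $\Psi$ of functions $\psi:N(v)\to\mathcal{S}$ and $I\subset\mathcal{S}$, $Z(\Psi,I)=\sum_{\psi\in\Psi}\big(\prod_{u\in N(v)}\lambda_{\psi(u)}\big)\big(\sum_{i\in I}\lambda_i\prod_{u\in N(v)}\lambda_{i,\psi(u)}\big)^{2d}$. *)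

From HB Require Import structures.
From mathcomp Require Import all_boot all_order all_algebra.
From mathcomp Require Import finmap.
From mathcomp Require Import reals exp.
Set Implicit Arguments. Unset Strict Implicit. Unset Printing Implicit Defensive.
Import Order.TTheory GRing.Theory Num.Theory.
Local Open Scope ring_scope.


Definition vtx (d : nat) := {ffun 'I_d -> int}.

Definition evenv d (v : vtx d) : bool := (2 %| \sum_i v i)%Z.

Definition nbr d (v : vtx d) (k : 'I_d * bool) : vtx d :=
  [ffun j => v j + (if j == k.1 then (if k.2 then 1 else -1) else 0)].

(* u has a neighbour outside S (so for u in S: u is in the inner boundary) *)
Definition has_out_nbr d (S : {fset vtx d}) (u : vtx d) : bool :=
  [exists k, nbr u k \notin S].

(* |partial u ∩ partial S| : number of edges from u leaving S *)
Definition n_out d (S : {fset vtx d}) (u : vtx d) : nat :=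
  #|[set k | nbr u k \notin S]|.

Definition even_set d (S : {fset vtx d}) : Prop :=
  forall u, u \in S -> has_out_nbr S u -> evenv u.

Section Spin.
Variables (R : realType) (Sp : finType) (lam : Sp -> R) (lam2 : Sp -> Sp -> R).
Variables (d : nat) (S : {fset vtx d}).

(* weight of a configuration; every nearest-neighbour edge of Z^d has exactly
   one even endpoint, so edges of E(S) are enumerated as (even u, neighbour w) *)
Definition weight (f : {ffun S -> Sp}) : R :=
  (\prod_(v : S) lam (f v)) *
  \prod_(u : S | evenv (val u))
     \prod_(w : S | [exists k, val w == nbr (val u) k]) lam2 (f u) (f w).

Definition omega (F : {set {ffun S -> Sp}}) : R := \sum_(f in F) weight f.

Definition lamI (I : {set Sp}) : R := \sum_(i in I) lam i.

(* f restricted to N(v), with N(v) identified with 'I_d * bool via nbr;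
   (the default branch is never used when N(v) ⊂ S) *)
Definition restr (f : {ffun S -> Sp}) (v : S) : {ffun 'I_d * bool -> Sp} :=
  [ffun k => match insub (nbr (val v) k) with Some w => f w | None => f v end].

Definition Zpart (Psi : {set {ffun 'I_d * bool -> Sp}}) (I : {set Sp}) : R :=
  \sum_(psi in Psi) (\prod_k lam (psi k)) *
     (\sum_(i in I) lam i * \prod_k lam2 i (psi k)) ^+ (2 * d).

Variable (F : {set {ffun S -> Sp}}).

Definition prob (E : pred {ffun S -> Sp}) : R :=
  (\sum_(f in F | E f) weight f) / omega F.

Definition fsupp : {set {ffun S -> Sp}} := [set f in F | 0 < weight f].

Variables (T : S -> eqType) (X : forall v : S, {ffun 'I_d * bool -> Sp} -> T v).

Definition PX (v : S) (x : T v) : R := prob (fun f => X v (restr f v) == x).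

Definition suppX (v : S) : seq (T v) :=
  undup [seq X v (restr f v) | f <- enum fsupp].

Definition ev (v : S) (x : T v) : {set {ffun S -> Sp}} :=
  [set f in fsupp | X v (restr f v) == x].

Definition Psi (v : S) (x : T v) : {set {ffun 'I_d * bool -> Sp}} :=
  [set restr (f : {ffun S -> Sp}) v | f in ev x].

Definition Iset (v : S) (x : T v) : {set Sp} := [set (f : {ffun S -> Sp}) v | f in ev x].

End Spin.

From HB Require Import structures.
From mathcomp Require Import all_boot all_order all_algebra.
From mathcomp Require Import finmap.
From mathcomp Require Import reals exp.
From mathcomp Require Import lra ring.
Set Implicit Arguments. Unset Strict Implicit. Unset Printing Implicit Defensive.
Import Order.TTheory GRing.Theory Num.Theory.
Local Open Scope ring_scope.

(* Entropy method.  Give f the law P(f) = omega_f / omega(F), so that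
   ln omega(F) = E[ln omega_f] + H(f).  By the chain rule and submodularity of
   entropy, H(f) <= H(f_even) + sum_{v odd} H(f_v | f_N(v)).  An even site u lies
   in N(v) for 2d - n_out u odd sites v; adding n_out u copies of {u} gives a
   2d-fold cover of the even sites, so Shearer's inequality yields
   2d H(f_even) <= sum_{v odd} H(f_N(v)) + sum_u n_out u * H(f_u).
   As omega_f is a product of one factor per even site and one per odd site,
   every term is now local.  At an odd site v, Gibbs' inequality, applied to
   f_N(v) given X_v and to f_v given f_N(v), bounds the contribution by
   sum_x P(X_v = x) ln (Z(Psi_{v,x}, I_{v,x}) / P(X_v = x)); at a boundary site u
   it bounds E[ln lam_{f(u)}] + H(f_u) by ln lam_{S_u}. *)

Lemma ln_le_subr1 (R : realType) (x : R) : 0 < x -> ln x <= x - 1.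
Proof. by move=> x0; have := @le_ln1Dx R (x - 1); rewrite [1 + _]addrC subrK; apply; lra. Qed.

Lemma ln_prod (R : realType) (I : eqType) (r : seq I) (P : pred I) (G : I -> R) :
  (forall i, i \in r -> P i -> 0 < G i) ->
  ln (\prod_(i <- r | P i) G i) = \sum_(i <- r | P i) ln (G i).
Proof.
move=> G0; rewrite big_seq_cond [RHS]big_seq_cond.
set Q := fun i => (i \in r) && P i.
suff [] : 0 < \prod_(i <- r | Q i) G i /\
          ln (\prod_(i <- r | Q i) G i) = \sum_(i <- r | Q i) ln (G i) by [].
apply: (big_rec2 (fun a b => 0 < b /\ ln b = a)); first by rewrite ln1.
move=> i a b /andP[ir Pi] [b0 <-]; split; first by rewrite mulr_gt0 ?G0.
by rewrite lnM ?posrE ?G0.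
Qed.

Lemma prod_powR_gt0 (R : realType) (I : eqType) (r : seq I) (P : pred I) (a c : I -> R) :
  (forall i, i \in r -> P i -> 0 < a i) -> 0 < \prod_(i <- r | P i) a i `^ c i.
Proof.
by move=> a0; rewrite big_seq_cond prodr_gt0 // => i /andP[ir Pi]; rewrite powR_gt0 ?a0.
Qed.

Lemma ln_prod_powR (R : realType) (I : eqType) (r : seq I) (P : pred I) (a c : I -> R) :
  (forall i, i \in r -> P i -> 0 < a i) ->
  ln (\prod_(i <- r | P i) a i `^ c i) = \sum_(i <- r | P i) c i * ln (a i).
Proof.
move=> a0; rewrite ln_prod => [|i ir Pi]; last by rewrite powR_gt0 ?a0.
by under eq_bigr do rewrite ln_powR.
Qed.

Lemma ln_mul_div (R : realType) (a b c e : R) : 0 < a -> 0 < b -> 0 < c -> 0 < e ->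
  ln (a * b / (c * e)) = ln a + ln b - ln c - ln e.
Proof.
move=> a0 b0 c0 e0; rewrite ln_div ?posrE ?mulr_gt0 // !lnM ?posrE //.
by rewrite opprD addrA.
Qed.

Lemma ler_sum_subset (R : numDomainType) (K : finType) (A B : {set K}) (phi : K -> R) :
  A \subset B -> (forall k, 0 <= phi k) ->
  \sum_(k in A) phi k <= \sum_(k in B) phi k.
Proof.
move=> AB phi0; rewrite [leRHS](big_setID A) /= (setIidPr AB).
by rewrite lerDl sumr_ge0.
Qed.

Section Entropy.
Variables (R : realType) (U Sp : finType).
Local Notation cfg := {ffun U -> Sp}.
Variables (P : cfg -> R) (D : {set cfg}).
Hypothesis P_gt0 : forall f, f \in D -> 0 < P f.
Hypothesis P_sum1 : \sum_(f in D) P f = 1.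

Definition agree (A : {set U}) (f g : cfg) := [forall u in A, f u == g u].

Lemma agree_refl (A : {set U}) (f : cfg) : agree A f f.
Proof. by apply/forall_inP. Qed.

Lemma agree_sym (A : {set U}) (f g : cfg) : agree A f g = agree A g f.
Proof. by apply/forall_inP/forall_inP => H u /H /eqP ->. Qed.

Lemma agree_trans (A : {set U}) (f g h : cfg) : agree A f g -> agree A g h -> agree A f h.
Proof.
move=> /forall_inP fg /forall_inP gh; apply/forall_inP => u uA.
by rewrite (eqP (fg _ uA)) gh.
Qed.

Lemma agree_sub (A B : {set U}) (f g : cfg) : A \subset B -> agree B f g -> agree A f g.
Proof. by move=> /subsetP AB /forall_inP H; apply/forall_inP => u /AB /H. Qed.

Lemma agreeU1 (e : U) (A : {set U}) (f g : cfg) : agree (e |: A) f g = (f e == g e) && agree A f g.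
Proof.
apply/forall_inP/andP => [H|[/eqP fe /forall_inP H] u /setU1P[->|/H//]].
  split; first by apply: H; rewrite setU11.
  by apply/forall_inP => u uA; apply: H; rewrite setU1r.
by rewrite fe.
Qed.

Lemma agree_set1 (u : U) (f g : cfg) : agree [set u] f g = (f u == g u).
Proof.
rewrite -[[set u]]setU0 agreeU1 [agree _ _ _](_ : _ = true) ?andbT //.
by apply/forall_inP => v; rewrite inE.
Qed.

Lemma agreeT (f g : cfg) : agree setT f g = (f == g).
Proof.
apply/forall_inP/eqP => [H|->//]; apply/ffunP => u; apply/eqP/H; exact: in_setT.
Qed.

Definition marg (A : {set U}) (f : cfg) := \sum_(g in D | agree A f g) P g.

Definition expect (phi : cfg -> R) := \sum_(f in D) P f * phi f.

Definition entropy (A : {set U}) := expect (fun f => - ln (marg A f)).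

Lemma P_ge0 (f : cfg) : f \in D -> 0 <= P f.
Proof. by move/P_gt0/ltW. Qed.

Lemma sum_P_gt0 (Q : pred cfg) (f : cfg) : f \in D -> Q f -> 0 < \sum_(g in D | Q g) P g.
Proof.
move=> fD Qf; rewrite (bigD1 f) /=; last by rewrite fD.
by rewrite ltr_pwDl ?P_gt0 // sumr_ge0 // => g /andP[/andP[/P_ge0]].
Qed.

Lemma marg_gt0 (A : {set U}) (f : cfg) : f \in D -> 0 < marg A f.
Proof. by move=> fD; apply: sum_P_gt0 fD (agree_refl A f). Qed.

Lemma sum_le_marg (A : {set U}) (Q : pred cfg) (f : cfg) :
  (forall g, g \in D -> Q g -> agree A f g) ->
  \sum_(g in D | Q g) P g <= marg A f.
Proof.
move=> QA; rewrite /marg [leRHS](bigID Q) /=.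
suff -> : \sum_(g in D | Q g) P g = \sum_(g | (g \in D) && agree A f g && Q g) P g.
  by rewrite lerDl sumr_ge0 // => g /andP[/andP[/P_ge0]].
apply: eq_bigl => g; case: (boolP (g \in D)) => //= gD.
by case: (boolP (Q g)) => Qg; rewrite ?andbT ?andbF ?QA.
Qed.

Lemma marg_agree (A : {set U}) (f g : cfg) : agree A f g -> marg A f = marg A g.
Proof.
move=> fg; apply: eq_bigl => h; congr (_ && _).
apply/idP/idP => [|/(agree_trans fg)//]; apply: agree_trans; by rewrite agree_sym.
Qed.

Lemma marg0 (f : cfg) : marg set0 f = 1.
Proof.
rewrite -P_sum1; apply: eq_bigl => g.
by rewrite (_ : agree _ _ _ = true) ?andbT //; apply/forall_inP => u; rewrite inE.
Qed.

Lemma margT (f : cfg) : f \in D -> marg setT f = P f.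
Proof.
move=> fD; rewrite /marg (eq_bigl (pred1 f)) ?big_pred1_eq // => g /=.
by rewrite agreeT eq_sym andbC; case: eqP => [->|].
Qed.

Lemma expectD (phi psi : cfg -> R) : expect (fun f => phi f + psi f) = expect phi + expect psi.
Proof. by rewrite /expect -big_split; apply: eq_bigr => f _; rewrite mulrDr. Qed.

Lemma expectN (phi : cfg -> R) : expect (fun f => - phi f) = - expect phi.
Proof. by rewrite /expect -sumrN; apply: eq_bigr => f _; rewrite mulrN. Qed.

Lemma expectB (phi psi : cfg -> R) : expect (fun f => phi f - psi f) = expect phi - expect psi.
Proof. by rewrite expectD expectN. Qed.

Lemma expectZ (c : R) (phi : cfg -> R) : expect (fun f => c * phi f) = c * expect phi.
Proof. by rewrite /expect mulr_sumr; apply: eq_bigr => f _; rewrite mulrCA. Qed.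

Lemma expect_cst (c : R) : expect (fun => c) = c.
Proof. by rewrite /expect -mulr_suml P_sum1 mul1r. Qed.

Lemma expect_sum (I : Type) (r : seq I) (Q : pred I) (phi : I -> cfg -> R) :
  expect (fun f => \sum_(i <- r | Q i) phi i f) = \sum_(i <- r | Q i) expect (phi i).
Proof. by rewrite /expect exchange_big; apply: eq_bigr => f _; rewrite mulr_sumr. Qed.

Lemma ler_expect (phi psi : cfg -> R) :
  (forall f, f \in D -> phi f <= psi f) -> expect phi <= expect psi.
Proof. by move=> H; apply: ler_sum => f fD; rewrite ler_wpM2l ?P_ge0 ?H. Qed.

Lemma eq_expect (phi psi : cfg -> R) :
  (forall f, f \in D -> phi f = psi f) -> expect phi = expect psi.
Proof. by move=> H; apply: eq_bigr => f fD; rewrite H. Qed.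

Lemma expect_ln_marg (A : {set U}) : expect (fun f => ln (marg A f)) = - entropy A.
Proof. by rewrite /entropy expectN opprK. Qed.

Lemma entropy0 : entropy set0 = 0.
Proof.
by rewrite /entropy (eq_expect (psi := fun => 0)) ?expect_cst // => f _; rewrite marg0 ln1 oppr0.
Qed.

Lemma expect_ln_le0 (r : cfg -> R) : (forall f, f \in D -> 0 < r f) -> expect r <= 1 ->
  expect (fun f => ln (r f)) <= 0.
Proof.
move=> r0 Er1; apply: (@le_trans _ _ (expect (fun f => r f - 1))).
  by apply: ler_expect => f fD; apply/ln_le_subr1/r0.
by rewrite expectB expect_cst subr_le0.
Qed.

Lemma sum_div_mass_le1 (Q : pred cfg) (p : cfg -> R) :
  (forall f, f \in D -> Q f -> \sum_(g in D | Q g) P g <= p f) ->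
  \sum_(f in D | Q f) P f / p f <= 1.
Proof.
move=> Qp; set s := \sum_(g in D | Q g) P g.
have [[f0 /andP[f0D Qf0]]|noQ] := pickP (fun f => (f \in D) && Q f); last first.
  by rewrite big1 // => f fQ; move: (noQ f); rewrite fQ.
have s0 : 0 < s by apply: sum_P_gt0 f0D Qf0.
apply: (@le_trans _ _ (\sum_(f in D | Q f) P f / s)).
  apply: ler_sum => f /andP[fD Qf]; rewrite ler_wpM2l ?P_ge0 //.
  by rewrite lef_pV2 ?posrE ?Qp // (lt_le_trans s0) ?Qp.
by rewrite -mulr_suml mulfV ?gt_eqF.
Qed.

Lemma sum_div_mass_fibres_le (K : finType) (Q : pred cfg) (y : cfg -> K)
    (p : cfg -> R) (phi : K -> R) :
  (forall k, 0 <= phi k) ->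
  (forall f, f \in D -> Q f -> \sum_(g in D | Q g && (y g == y f)) P g <= p f) ->
  \sum_(f in D | Q f) P f * phi (y f) / p f <=
  \sum_(k in [set y f | f in [set f in D | Q f]]) phi k.
Proof.
move=> phi0 Qp; rewrite (partition_big y predT) //= [leRHS]big_mkcond /=.
apply: ler_sum => k _.
rewrite (eq_bigr (fun f => phi k * (P f / p f))); last first.
  by move=> f /andP[_ /eqP <-]; rewrite mulrCA mulrA.
rewrite -mulr_sumr; case: ifP => Hk.
  rewrite -[leRHS]mulr1 ler_wpM2l //.
  rewrite (eq_bigl (fun f => (f \in D) && (Q f && (y f == k)))) => [|f]; last by rewrite andbA.
  apply: sum_div_mass_le1 => f fD /andP[Qf /eqP <-]; exact: Qp.
rewrite big1 ?mulr0 // => f /andP[/andP[fD Qf] /eqP yf].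
by move: Hk; rewrite -yf imset_f // inE fD.
Qed.

Lemma sum_partition_seq (T : eqType) (s : seq T) (x : cfg -> T) (G : cfg -> R) :
  uniq s -> (forall f, f \in D -> x f \in s) ->
  \sum_(f in D) G f = \sum_(t <- s) \sum_(f in D | x f == t) G f.
Proof.
move=> us xs.
rewrite (eq_bigr (fun t => \sum_(f in D) (if x f == t then G f else 0))); last first.
  by move=> t _; rewrite big_mkcondr.
rewrite exchange_big /=; apply: eq_bigr => f fD.
rewrite (bigD1_seq (x f)) ?xs //= eqxx big1 ?addr0 // => t /negPf.
by rewrite eq_sym => ->.
Qed.

Lemma expect_tower (A : {set U}) (phi : cfg -> R) :
  expect phi = \sum_(g in D) P g / marg A g * \sum_(f in D | agree A g f) P f * phi f.
Proof.
rewrite /expect; under [RHS]eq_bigr do rewrite mulr_sumr big_mkcondr.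
rewrite exchange_big /=; apply: eq_bigr => f fD.
rewrite -big_mkcondr /= (eq_bigr (fun g => P f * phi f * (P g / marg A f))); last first.
  by move=> g /andP[_ gf]; rewrite (marg_agree gf); ring.
rewrite -mulr_sumr -mulr_suml (eq_bigl _ _ (fun g => congr1 (andb _) (agree_sym A g f))).
by rewrite mulfV ?mulr1 // gt_eqF // marg_gt0.
Qed.

Lemma expect_submod_ratio_le1 (A B : {set U}) (e : U) : A \subset B ->
  expect (fun f => marg (e |: A) f * marg B f / (marg A f * marg (e |: B) f)) <= 1.
Proof.
move=> AB; pose phi g k := \sum_(h in D | agree A g h && (h e == k)) P h.
have phi_ge0 g k : 0 <= phi g k by apply: sumr_ge0 => h /andP[/P_ge0].
have cond_le g : \sum_(f in D | agree B g f) P f * phi g (f e) / marg (e |: B) f <= marg A g.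
  apply: le_trans (sum_div_mass_fibres_le _ _) _ => [//|f fD gf|].
    apply: sum_le_marg => h hD /andP[gh /eqP /= he].
    by rewrite agreeU1 he eqxx (agree_trans _ gh) // agree_sym.
  suff -> : marg A g = \sum_(k in [set: Sp]) phi g k by apply: ler_sum_subset.
  rewrite /marg (partition_big (fun h : cfg => h e) predT) //=.
  by apply: eq_big => [k|k _]; rewrite ?in_setT //; apply: eq_bigl => h; rewrite andbA.
rewrite (expect_tower B) -P_sum1; apply: ler_sum => g gD.
have mA0 := marg_gt0 A gD; have mB0 := marg_gt0 B gD.
rewrite (eq_bigr (fun f => marg B g / marg A g * (P f * phi g (f e) / marg (e |: B) f))).
  rewrite -mulr_sumr; set t := \sum_(f in D | _) _.
  have -> : P g / marg B g * (marg B g / marg A g * t) = P g * (t / marg A g).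
    by field; rewrite !gt_eqF.
  by rewrite ler_piMr ?P_ge0 // ler_pdivrMr // mul1r cond_le.
move=> f /andP[fD gf]; have gfA := agree_sub AB gf.
rewrite -(marg_agree gf) -(marg_agree gfA).
have -> : marg (e |: A) f = phi g (f e).
  apply: eq_bigl => h; rewrite agreeU1 eq_sym; congr (_ && _); rewrite andbC.
  by congr (_ && _); apply/idP/idP; apply: agree_trans; rewrite // agree_sym.
by rewrite invfM; ring.
Qed.

Lemma entropy_submod (A B : {set U}) (e : U) : A \subset B ->
  entropy (e |: B) - entropy B <= entropy (e |: A) - entropy A.
Proof.
move=> AB.
have ratio_gt0 f : f \in D -> 0 < marg (e |: A) f * marg B f / (marg A f * marg (e |: B) f).
  by move=> fD; rewrite !(mulr_gt0, invr_gt0, marg_gt0).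
have := expect_ln_le0 ratio_gt0 (expect_submod_ratio_le1 e AB).
rewrite (eq_expect (psi := fun f => ln (marg (e |: A) f) + ln (marg B f)
                               - ln (marg A f) - ln (marg (e |: B) f))) => [|f fD].
  by rewrite !expectB expectD !expect_ln_marg; lra.
by rewrite ln_mul_div ?marg_gt0.
Qed.

Lemma entropy_chain_le (s : seq U) (B : {set U}) (N : U -> {set U}) :
  (forall v, v \in s -> N v \subset B) ->
  entropy (B :|: [set x in s]) <=
    entropy B + \sum_(v <- s) (entropy (v |: N v) - entropy (N v)).
Proof.
elim: s B => [|v s IH] B NB.
  by rewrite big_nil addr0 (_ : [set x in [::]] = set0) ?setU0 //; apply/setP => x; rewrite !inE.
have -> : B :|: [set x in v :: s] = (v |: B) :|: [set x in s].
  by apply/setP => x; rewrite !inE orbA [(x == v) || _]orbC.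
rewrite big_cons; apply: (le_trans (IH _ _)).
  by move=> u us; apply: subset_trans (NB u _) _; rewrite ?subsetUr // inE us orbT.
have := entropy_submod v (NB v (mem_head _ _)); lra.
Qed.

Lemma shearer_rel (I : finType) (A : I -> {set U}) (c : I -> R) (k : R)
    (s : seq U) (B : {set U}) :
  (forall i, 0 <= c i) ->
  (forall e, e \in s -> \sum_i c i * (e \in A i)%:R = k) ->
  k * (entropy (B :|: [set x in s]) - entropy B) <=
    \sum_i c i * (entropy (A i :&: (B :|: [set x in s])) - entropy (A i :&: B)).
Proof.
move=> c0; elim: s B => [|e s IH] B cover.
  rewrite (_ : [set x in [::]] = set0) ?setU0 ?subrr ?mulr0; last by apply/setP => x; rewrite !inE.
  by rewrite big1 // => i _; rewrite subrr mulr0.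
have -> : B :|: [set x in e :: s] = (e |: B) :|: [set x in s].
  by apply/setP => x; rewrite !inE orbA [(x == e) || _]orbC.
have {}IH := IH (e |: B) (fun e' se' => cover e' (@mem_behead _ (e :: s) e' se')).
have step : k * (entropy (e |: B) - entropy B) <=
    \sum_i c i * (entropy (A i :&: (e |: B)) - entropy (A i :&: B)).
  rewrite -(cover e (mem_head _ _)) mulr_suml; apply: ler_sum => i _.
  rewrite -mulrA ler_wpM2l //; case: (boolP (e \in A i)) => eA /=; last first.
    have -> : A i :&: (e |: B) = A i :&: B.
      by apply/setP => x; rewrite !inE; case: (x =P e) => [->|//]; rewrite (negPf eA).
    by rewrite mul0r subrr.
  have -> : A i :&: (e |: B) = e |: (A i :&: B).
    by apply/setP => x; rewrite !inE; case: (x =P e) => [->|//]; rewrite eA.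
  by rewrite mul1r entropy_submod ?subsetIr.
rewrite (eq_bigr (fun i => c i * (entropy (A i :&: (e |: B :|: [set x in s]))
                                   - entropy (A i :&: (e |: B)))
                         + c i * (entropy (A i :&: (e |: B)) - entropy (A i :&: B))));
  last by move=> i _; ring.
rewrite big_split /=; lra.
Qed.

Lemma shearer (I : finType) (A : I -> {set U}) (c : I -> R) (k : R) (E : {set U}) :
  (forall i, 0 <= c i) -> (forall i, A i \subset E) ->
  (forall e, e \in E -> \sum_i c i * (e \in A i)%:R = k) ->
  k * entropy E <= \sum_i c i * entropy (A i).
Proof.
move=> c0 AE cover; have := @shearer_rel I A c k (enum E) set0 c0.
have -> : set0 :|: [set x in enum E] = E by apply/setP => x; rewrite !inE mem_enum.
rewrite entropy0 subr0; under eq_bigr do rewrite setI0 entropy0 subr0 (setIidPl (AE _)).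
by apply=> e; rewrite mem_enum; apply: cover.
Qed.

End Entropy.

Lemma dvdz2S (z : int) : (2 %| z + 1)%Z = ~~ (2 %| z)%Z.
Proof.
case: z => [n|[|n]] //; first by rewrite -PoszD addn1 !dvdzE /= !dvdn2 /= negbK.
rewrite NegzE (_ : - (Posz n.+2) + 1 = - Posz n.+1); last first.
  by rewrite -addn1 PoszD opprD addrNK.
by rewrite !dvdzE !abszN /= -[addn 1 1]/2%N !dvdn2 /= !negbK.
Qed.

Lemma dvdz2B1 (z : int) : (2 %| z - 1)%Z = ~~ (2 %| z)%Z.
Proof. by rewrite -{2}(subrK 1 z) dvdz2S negbK. Qed.

Section Lattice.
Variable d : nat.

Lemma even_nbr (u : vtx d) k : evenv (nbr u k) = ~~ evenv u.
Proof.
rewrite /evenv; have -> : \sum_j nbr u k j = \sum_j u j + (if k.2 then 1 else -1).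
  under eq_bigr do rewrite ffunE.
  by rewrite big_split /= -big_mkcond /= big_pred1_eq.
by case: k.2; rewrite ?dvdz2S ?dvdz2B1.
Qed.

Lemma nbr_inj (u : vtx d) : injective (nbr u).
Proof.
move=> [i b] [j c] /ffunP /(_ i); rewrite !ffunE eqxx /= => /addrI.
by case: (eqVneq i j) => [<-|]; case: b; case: c.
Qed.

Lemma nbr_nbr (u : vtx d) i b : nbr (nbr u (i, b)) (i, ~~ b) = u.
Proof.
apply/ffunP => j; rewrite !ffunE /=; case: (j == i); last by rewrite !addr0.
by case: b => /=; rewrite -addrA ?subrr ?addNr addr0.
Qed.

Lemma adj_sym (u w : vtx d) : [exists k, w == nbr u k] -> [exists k, u == nbr w k].
Proof.
by case/existsP => [[i b] /eqP ->]; apply/existsP; exists (i, ~~ b); rewrite nbr_nbr.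
Qed.

End Lattice.

Section Graph.
Variables (d : nat) (S : {fset vtx d}).
Hypothesis hS : even_set S.

Definition nbhd (v : S) : {set S} := [set w : S | [exists k, val w == nbr (val v) k]].

(* The default [v] is only taken when the neighbour lies outside [S], never for odd [v]. *)
Definition nbr_in (v : S) (k : 'I_d * bool) : S := odflt v (insub (nbr (val v) k)).

Definition evens : {set S} := [set u : S | evenv (val u)].

Lemma odd_nbr_in_S (v : S) k : ~~ evenv (val v) -> nbr (val v) k \in S.
Proof.
move=> ov; apply/negPn/negP => out; move/negP: ov; apply; apply: hS; first exact: fsvalP.
by apply/existsP; exists k.
Qed.

Lemma val_nbr_in (v : S) k : nbr (val v) k \in S -> val (nbr_in v k) = nbr (val v) k.
Proof. by move=> vkS; rewrite /nbr_in insubT. Qed.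

Lemma restr_nbr_in (Sp : finType) (f : {ffun S -> Sp}) v k : restr f v k = f (nbr_in v k).
Proof. by rewrite /restr ffunE /nbr_in; case: insub. Qed.

Lemma nbr_in_inj (v : S) : {in [set k | nbr (val v) k \in S] &, injective (nbr_in v)}.
Proof.
by move=> k1 k2; rewrite !inE => h1 h2 /(congr1 val); rewrite !val_nbr_in // => /nbr_inj.
Qed.

Lemma nbhdE (v : S) : nbhd v = nbr_in v @: [set k | nbr (val v) k \in S].
Proof.
apply/setP => w; rewrite inE; apply/existsP/imsetP => [[k /eqP wk]|[k + ->]].
  exists k; first by rewrite inE -wk; apply: fsvalP.
  by apply: val_inj; rewrite val_nbr_in // -wk; apply: fsvalP.
by rewrite inE => vkS; exists k; rewrite val_nbr_in.
Qed.

Lemma nbhd_odd (v : S) : ~~ evenv (val v) -> nbhd v = nbr_in v @: setT.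
Proof.
move=> ov; rewrite nbhdE (_ : [set k | _] = setT) //.
by apply/setP => k; rewrite !inE odd_nbr_in_S.
Qed.

Lemma big_nbhd (T : Type) (idx : T) (op : Monoid.com_law idx) (v : S) (h : S -> T) :
  ~~ evenv (val v) -> \big[op/idx]_(u in nbhd v) h u = \big[op/idx]_k h (nbr_in v k).
Proof.
move=> ov; rewrite nbhd_odd // big_imset /=; first by apply: eq_bigl => k; rewrite inE.
by move=> k1 k2 _ _; apply: nbr_in_inj; rewrite inE odd_nbr_in_S.
Qed.

Lemma n_out_nbhd (v : S) : (n_out S (val v) + #|nbhd v| = 2 * d)%N.
Proof.
rewrite nbhdE card_in_imset; last exact: nbr_in_inj.
rewrite /n_out -cardsUI; set A := [set k | _ \notin S]; set B := [set k | _ \in S].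
have -> : A :|: B = setT by apply/setP => k; rewrite !inE orNb.
have -> : A :&: B = set0 by apply/setP => k; rewrite !inE andNb.
by rewrite cardsT cards0 addn0 card_prod card_ord card_bool mulnC.
Qed.

Lemma nbhd_sym (u w : S) : (w \in nbhd u) = (u \in nbhd w).
Proof. by rewrite !inE; apply/idP/idP => /adj_sym. Qed.

Lemma even_nbhd (u w : S) : w \in nbhd u -> evenv (val w) = ~~ evenv (val u).
Proof. by rewrite inE => /existsP[k /eqP ->]; rewrite even_nbr. Qed.

Lemma big_edges (T : Type) (idx : T) (op : Monoid.com_law idx) (g : S -> S -> T) :
  \big[op/idx]_(u : S | evenv (val u))
     \big[op/idx]_(w : S | [exists k, val w == nbr (val u) k]) g u w =
  \big[op/idx]_(w : S | ~~ evenv (val w)) \big[op/idx]_(u in nbhd w) g u w.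
Proof.
transitivity (\big[op/idx]_u \big[op/idx]_w
                (if evenv (val u) && (w \in nbhd u) then g u w else idx)).
  rewrite big_mkcond; apply: eq_bigr => u _; case: ifP => eu /=; last by rewrite big1.
  by rewrite big_mkcond; apply: eq_bigr => w _; rewrite inE.
rewrite exchange_big [RHS]big_mkcond; apply: eq_bigr => w _.
case: (boolP (evenv (val w))) => ew /=.
  apply: big1 => u _; case: (boolP (w \in nbhd u)) => [wu|]; last by rewrite andbF.
  by move: (even_nbhd wu); rewrite ew; case: (evenv (val u)).
rewrite [RHS]big_mkcond; apply: eq_bigr => u _; rewrite nbhd_sym.
case: (boolP (u \in nbhd w)) => [uw|]; last by rewrite andbF.
by rewrite (even_nbhd uw) (negPf ew).
Qed.

Definition cover_set (w : S) : {set S} := if evenv (val w) then [set w] else nbhd w.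
Definition cover_wt (R : numDomainType) (w : S) : R :=
  if evenv (val w) then (n_out S (val w))%:R else 1.

Lemma cover_wt_ge0 (R : numDomainType) (w : S) : 0 <= cover_wt R w.
Proof. by rewrite /cover_wt; case: ifP. Qed.

Lemma cover_set_evens (w : S) : cover_set w \subset evens.
Proof.
rewrite /cover_set; case: ifP => ew; apply/subsetP => u.
  by rewrite !inE => /eqP ->.
by move=> /even_nbhd eu; rewrite inE eu ew.
Qed.

Lemma sum_cover_wt (R : numDomainType) (G : S -> R) :
  \sum_w cover_wt R w * G w =
  \sum_(u | evenv (val u)) (n_out S (val u))%:R * G u + \sum_(v | ~~ evenv (val v)) G v.
Proof.
rewrite (bigID (fun u => evenv (val u))) /=; congr (_ + _).
  by apply: eq_bigr => u eu; rewrite /cover_wt eu.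
by apply: eq_bigr => v /negPf ov; rewrite /cover_wt ov mul1r.
Qed.

Lemma cover_count (R : numDomainType) (e : S) : evenv (val e) ->
  \sum_w cover_wt R w * (e \in cover_set w)%:R = (2 * d)%:R.
Proof.
move=> ee; rewrite sum_cover_wt -(n_out_nbhd e) natrD; congr (_ + _).
  rewrite (bigD1 e) //= /cover_set ee inE eqxx mulr1 big1 ?addr0 // => w /andP[ew we].
  by rewrite /cover_set ew inE eq_sym (negPf we) mulr0.
rewrite -sumr_const big_mkcond [RHS]big_mkcond /=; apply: eq_bigr => w _.
rewrite /cover_set; case: (boolP (w \in nbhd e)) => we.
  by rewrite (even_nbhd we) ee /= -nbhd_sym we.
by case: ifP => // /negPf ->; rewrite -nbhd_sym (negPf we).
Qed.

Lemma sum_cover (R : numDomainType) (phi : S -> R) :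
  \sum_w cover_wt R w * \sum_(u in cover_set w) phi u =
  (2 * d)%:R * \sum_(u | evenv (val u)) phi u.
Proof.
transitivity (\sum_u phi u * \sum_w cover_wt R w * (u \in cover_set w)%:R).
  under eq_bigr do rewrite mulr_sumr big_mkcond /=.
  rewrite exchange_big /=; apply: eq_bigr => u _; rewrite mulr_sumr.
  by apply: eq_bigr => w _; case: (u \in cover_set w); rewrite ?mulr0 ?mulr1 // mulrC.
rewrite mulr_sumr [RHS]big_mkcond; apply: eq_bigr => u _.
case: ifP => eu; first by rewrite cover_count // mulrC.
rewrite big1 ?mulr0 // => w _; case: (boolP (u \in cover_set w)) => [|_]; last by rewrite mulr0.
by move/(subsetP (cover_set_evens w)); rewrite inE eu.
Qed.

End Graph.

Arguments evens {d S}.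

Section SpinModel.
Variables (R : realType) (Sp : finType) (lam : Sp -> R) (lam2 : Sp -> Sp -> R).
Variables (d : nat) (S : {fset vtx d}).
Hypothesis hlam : forall i, 0 < lam i.
Hypothesis hlam2 : forall i j, 0 <= lam2 i j.
Hypothesis hsym : forall i j, lam2 i j = lam2 j i.
Hypothesis hS : even_set S.

Local Notation cfg := {ffun S -> Sp}.
Local Notation nbr_cfg := {ffun 'I_d * bool -> Sp}.
Local Notation w := (weight lam lam2).

Definition site_wt (psi : nbr_cfg) (i : Sp) : R := lam i * \prod_k lam2 i (psi k).

Definition nbr_lam (psi : nbr_cfg) : R := \prod_k lam (psi k).

Lemma site_wt_ge0 psi i : 0 <= site_wt psi i.
Proof. by rewrite mulr_ge0 ?prodr_ge0 ?ltW. Qed.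

Lemma nbr_lam_gt0 psi : 0 < nbr_lam psi.
Proof. exact: prodr_gt0. Qed.

Lemma weight_ge0 (f : cfg) : 0 <= w f.
Proof. by rewrite mulr_ge0 ?prodr_ge0 // => *; rewrite ?prodr_ge0 ?ltW. Qed.

(* Each edge has exactly one odd endpoint, so the edge factors regroup around odd sites. *)
Lemma weightE (f : cfg) : w f =
  (\prod_(u : S | evenv (val u)) lam (f u)) *
  \prod_(v : S | ~~ evenv (val v)) site_wt (restr f v) (f v).
Proof.
rewrite /weight (bigID (fun u => evenv (val u))) /= -mulrA big_edges -big_split /=.
congr (_ * _); apply: eq_bigr => v ov; congr (_ * _).
by rewrite big_nbhd //; apply: eq_bigr => k _; rewrite hsym restr_nbr_in.
Qed.

Variables (Su : S -> {set Sp}) (F : {set cfg}).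
Hypothesis hF : forall f, f \in F -> forall u : S, has_out_nbr S (val u) -> f u \in Su u.
Hypothesis hpos : 0 < omega lam lam2 F.
Variables (T : S -> eqType) (X : forall v : S, nbr_cfg -> T v).

Local Notation Om := (omega lam lam2 F).
Local Notation D := (fsupp lam lam2 F).

Definition Pr (f : cfg) : R := w f / Om.

Local Notation E := (expect Pr D).
Local Notation H := (entropy Pr D).
Local Notation marg := (marg Pr D).
Local Notation K := ((2 * d)%:R : R).
Local Notation xf v f := (X v (restr f v)).
Local Notation PXx x := (PX lam lam2 F X x).
Local Notation Zx x := (Zpart lam lam2 (Psi lam lam2 F X x) (Iset lam lam2 F X x)).
Local Notation suppXv v := (suppX lam lam2 F X v).

Lemma Pr_gt0 (f : cfg) : f \in D -> 0 < Pr f.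
Proof. by rewrite inE => /andP[_ wf]; rewrite divr_gt0. Qed.

Lemma sum_weight_fsupp (Q : pred cfg) : \sum_(f in F | Q f) w f = \sum_(f in D | Q f) w f.
Proof.
rewrite (bigID (fun f => 0 < w f)) /= [X in _ + X]big1 ?addr0 => [|f /andP[_]].
  by apply: eq_bigl => f; rewrite inE -andbA [Q f && _]andbC andbA.
by rewrite lt_def weight_ge0 andbT negbK => /eqP.
Qed.

Lemma Pr_sum1 : \sum_(f in D) Pr f = 1.
Proof.
rewrite /Pr -mulr_suml -(eq_bigl _ _ (fun f => andbT (f \in D))) -sum_weight_fsupp.
by under eq_bigl do rewrite andbT; rewrite mulfV ?gt_eqF.
Qed.

Lemma fsupp_nonempty : exists f, f \in D.
Proof.
have [f fD|noD] := pickP [in D]; first by exists f.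
by move: Pr_sum1; rewrite big_pred0 // => /esym/eqP; rewrite oner_eq0.
Qed.

Lemma PX_sum (v : S) (x : T v) : PXx x = \sum_(f in D | xf v f == x) Pr f.
Proof. by rewrite /PX /prob sum_weight_fsupp mulr_suml. Qed.

Lemma site_wt_gt0 (f : cfg) (v : S) : f \in D -> ~~ evenv (val v) ->
  0 < site_wt (restr f v) (f v).
Proof.
move=> fD ov; rewrite lt_def site_wt_ge0 andbT.
move: fD; rewrite inE => /andP[_]; rewrite weightE => /gt_eqF/negbT.
rewrite mulf_eq0 negb_or => /andP[_]; rewrite prodf_seq_neq0 => /allP /(_ v).
by rewrite mem_index_enum ov => /(_ isT).
Qed.

Lemma in_ev (v : S) (f : cfg) : f \in D -> f \in ev lam lam2 F X (xf v f).
Proof. by move=> fD; rewrite inE fD eqxx. Qed.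

Definition Isum (v : S) (x : T v) (psi : nbr_cfg) : R :=
  \sum_(i in Iset lam lam2 F X x) site_wt psi i.

Lemma Isum_gt0 (v : S) (f : cfg) : f \in D -> ~~ evenv (val v) ->
  0 < Isum (xf v f) (restr f v).
Proof.
move=> fD ov; rewrite /Isum (bigD1 (f v)) /=; last exact/imset_f/in_ev.
by rewrite ltr_pwDl ?site_wt_gt0 ?sumr_ge0 // => i _; apply: site_wt_ge0.
Qed.

Lemma Isum_ge0 (v : S) (x : T v) (psi : nbr_cfg) : 0 <= Isum x psi.
Proof. by apply: sumr_ge0 => i _; apply: site_wt_ge0. Qed.

Lemma ZxE (v : S) (x : T v) :
  Zx x = \sum_(psi in Psi lam lam2 F X x) nbr_lam psi * Isum x psi ^+ (2 * d).
Proof. by []. Qed.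

Lemma Zx_ge0 (v : S) (x : T v) : 0 <= Zx x.
Proof.
by rewrite ZxE sumr_ge0 // => psi _; rewrite mulr_ge0 ?exprn_ge0 ?Isum_ge0 ?ltW ?nbr_lam_gt0.
Qed.

Lemma Zx_gt0 (v : S) (f : cfg) : f \in D -> ~~ evenv (val v) -> 0 < Zx (xf v f).
Proof.
move=> fD ov; rewrite ZxE (bigD1 (restr f v)) /=; last exact/imset_f/in_ev.
rewrite ltr_pwDl ?mulr_gt0 ?exprn_gt0 ?nbr_lam_gt0 ?Isum_gt0 // sumr_ge0 // => psi _.
by rewrite mulr_ge0 ?exprn_ge0 ?Isum_ge0 ?ltW ?nbr_lam_gt0.
Qed.

Lemma PXx_ge0 (v : S) (x : T v) : 0 <= PXx x.
Proof. by rewrite PX_sum sumr_ge0 // => g /andP[/Pr_gt0/ltW]. Qed.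

Lemma PXx_gt0 (v : S) (f : cfg) : f \in D -> 0 < PXx (xf v f).
Proof. by move=> fD; rewrite PX_sum (sum_P_gt0 Pr_gt0 fD). Qed.

Lemma suppX_mem (v : S) (f : cfg) : f \in D -> xf v f \in suppXv v.
Proof. by move=> fD; rewrite mem_undup; apply: map_f; rewrite mem_enum. Qed.

Lemma suppXP (v : S) (x : T v) : x \in suppXv v -> exists2 f, f \in D & xf v f = x.
Proof. by rewrite mem_undup => /mapP[f]; rewrite mem_enum => fD ->; exists f. Qed.

Lemma sum_suppX (v : S) (G : cfg -> R) :
  \sum_(f in D) G f = \sum_(x <- suppXv v) \sum_(f in D | xf v f == x) G f.
Proof. exact/sum_partition_seq/suppX_mem/undup_uniq. Qed.

Lemma PXx_sum1 (v : S) : \sum_(x <- suppXv v) PXx x = 1.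
Proof. by rewrite -Pr_sum1 (sum_suppX v); apply: eq_bigr => x _; rewrite PX_sum. Qed.

Lemma Z_div_PX_gt0 (v : S) (x : T v) : ~~ evenv (val v) -> x \in suppXv v ->
  0 < Zx x / PXx x.
Proof. by move=> ov /suppXP[f fD <-]; rewrite divr_gt0 ?Zx_gt0 ?PXx_gt0. Qed.

Lemma agree_nbhd (v : S) (f g : cfg) : ~~ evenv (val v) ->
  agree (nbhd v) f g = (restr f v == restr g v).
Proof.
move=> ov; rewrite nbhd_odd //; apply/forall_inP/eqP => [fg|fg _ /imsetP[k _ ->]].
  by apply/ffunP => k; rewrite !restr_nbr_in; apply/eqP/fg/imset_f.
by rewrite -!restr_nbr_in fg.
Qed.

Lemma expect_ln_Z_div_PX (v : S) :
  E (fun f => ln (Zx (xf v f) / PXx (xf v f))) =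
  \sum_(x <- suppXv v) PXx x * ln (Zx x / PXx x).
Proof.
rewrite /expect (sum_suppX v); apply: eq_bigr => x _.
rewrite (eq_bigr (fun f => Pr f * ln (Zx x / PXx x))) => [|f /andP[_ /eqP ->] //].
by rewrite -mulr_suml -PX_sum.
Qed.

(* Given [X_v = x], the law of [f|N(v)] is compared with the probability vector
   [psi |-> nbr_lam psi * Isum x psi ^+ 2d / Zx x] on [Psi x]. *)
Lemma expect_ln_nbhd_ratio_le0 (v : S) : ~~ evenv (val v) ->
  E (fun f => ln (nbr_lam (restr f v) * Isum (xf v f) (restr f v) ^+ (2 * d)
                  / (Zx (xf v f) / PXx (xf v f) * marg (nbhd v) f))) <= 0.
Proof.
move=> ov; apply: (expect_ln_le0 Pr_gt0 Pr_sum1) => [f fD|].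
  by rewrite divr_gt0 ?(mulr_gt0 (Z_div_PX_gt0 ov (suppX_mem v fD))) ?mulr_gt0
             ?exprn_gt0 ?nbr_lam_gt0 ?Isum_gt0 ?(marg_gt0 Pr_gt0).
rewrite /expect (sum_suppX v) -(PXx_sum1 v); apply: ler_sum => x _.
pose phi psi := nbr_lam psi * Isum x psi ^+ (2 * d).
rewrite (eq_bigr (fun f => PXx x / Zx x * (Pr f * phi (restr f v) / marg (nbhd v) f)));
  last by move=> f /andP[_ /eqP ->]; rewrite /phi invfM invf_div; ring.
rewrite -mulr_sumr; apply: le_trans (ler_wpM2l _ (sum_div_mass_fibres_le Pr_gt0 _ _)) _.
- by rewrite divr_ge0 ?PXx_ge0 ?Zx_ge0.
- by move=> psi; rewrite mulr_ge0 ?exprn_ge0 ?Isum_ge0 ?ltW ?nbr_lam_gt0.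
- move=> f fD _; apply: (sum_le_marg Pr_gt0) => g gD /andP[_ /eqP fg].
  by rewrite agree_nbhd // fg.
rewrite -ZxE; have [->|Z0] := eqVneq (Zx x) 0; first by rewrite mulr0 PXx_ge0.
by rewrite divfK.
Qed.

(* Given [f|N(v) = psi], the law of [f v] is compared with the probability vector
   [i |-> site_wt psi i / Isum x psi] on [Iset x], where [x = X v psi]. *)
Lemma expect_ln_site_ratio_le0 (v : S) : ~~ evenv (val v) ->
  E (fun f => ln (site_wt (restr f v) (f v) * marg (nbhd v) f
                  / (Isum (xf v f) (restr f v) * marg (v |: nbhd v) f))) <= 0.
Proof.
move=> ov; apply: (expect_ln_le0 Pr_gt0 Pr_sum1) => [f fD|].
  by rewrite divr_gt0 // mulr_gt0 ?site_wt_gt0 ?Isum_gt0 ?(marg_gt0 Pr_gt0).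
rewrite (expect_tower Pr_gt0 (nbhd v)) -Pr_sum1; apply: ler_sum => g gD.
have mg0 := marg_gt0 Pr_gt0 (nbhd v) gD; have Ig0 := Isum_gt0 gD ov.
set I := Isum (xf v g) (restr g v).
rewrite (eq_bigr (fun f => marg (nbhd v) g / I *
                          (Pr f * site_wt (restr g v) (f v) / marg (v |: nbhd v) f))); last first.
  move=> f /andP[fD gf]; have /eqP fg : restr g v == restr f v by rewrite -agree_nbhd.
  by rewrite -fg (marg_agree _ _ gf) invfM; ring.
rewrite -mulr_sumr; set t := \sum_(f in D | _) _.
suff t_le : t <= I.
  have -> : Pr g / marg (nbhd v) g * (marg (nbhd v) g / I * t) = Pr g * (t / I).
    by field; rewrite !gt_eqF.
  by rewrite ler_piMr ?(ltW (Pr_gt0 gD)) // ler_pdivrMr // mul1r.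
apply: le_trans (sum_div_mass_fibres_le Pr_gt0 (site_wt_ge0 _) _) _.
  move=> f fD gf; apply: (sum_le_marg Pr_gt0) => h hD /andP[gh /eqP /= hf].
  by rewrite agreeU1 hf eqxx (agree_trans _ gh) // agree_sym.
apply: ler_sum_subset (site_wt_ge0 _); apply/subsetP => i /imsetP[f].
rewrite inE => /andP[fD gf] ->; apply/imset_f; rewrite inE fD /=.
by move: gf; rewrite agree_nbhd // => /eqP <-.
Qed.

Lemma odd_site_bound (v : S) : ~~ evenv (val v) ->
  E (fun f => ln (nbr_lam (restr f v))) + K * E (fun f => ln (site_wt (restr f v) (f v)))
  + H (nbhd v) + K * (H (v |: nbhd v) - H (nbhd v))
  <= \sum_(x <- suppXv v) PXx x * ln (Zx x / PXx x).
Proof.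
move=> ov; rewrite -expect_ln_Z_div_PX.
have := expect_ln_nbhd_ratio_le0 ov.
rewrite (eq_expect Pr (psi := fun f => ln (nbr_lam (restr f v))
    + K * ln (Isum (xf v f) (restr f v)) - ln (Zx (xf v f) / PXx (xf v f))
    - ln (marg (nbhd v) f))) => [|f fD]; last first.
  rewrite ln_mul_div ?exprn_gt0 ?nbr_lam_gt0 ?Isum_gt0 ?(marg_gt0 Pr_gt0)
          ?(Z_div_PX_gt0 ov (suppX_mem v fD)) //.
  by rewrite lnXn ?Isum_gt0 // mulr_natl.
have := expect_ln_site_ratio_le0 ov.
rewrite (eq_expect Pr (psi := fun f => ln (site_wt (restr f v) (f v)) + ln (marg (nbhd v) f)
    - ln (Isum (xf v f) (restr f v)) - ln (marg (v |: nbhd v) f))) => [|f fD]; last first.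
  by rewrite ln_mul_div ?site_wt_gt0 ?Isum_gt0 ?(marg_gt0 Pr_gt0).
rewrite !expectB !expectD expectZ !expect_ln_marg => site nbhd.
have K0 : 0 <= K by rewrite ler0n.
have := ler_wpM2l K0 site; rewrite mulr0 !mulrBr ?mulrDr.
lra.
Qed.

Lemma lamI_gt0 (u : S) : has_out_nbr S (val u) -> 0 < lamI lam (Su u).
Proof.
move=> hu; have [f fD] := fsupp_nonempty; have fF : f \in F by move: fD; rewrite inE => /andP[].
by rewrite /lamI (bigD1 (f u)) ?hF //= ltr_pwDl ?sumr_ge0 // => i _; apply: ltW.
Qed.

Lemma boundary_site_bound (u : S) : has_out_nbr S (val u) ->
  E (fun f => ln (lam (f u))) + H [set u] <= ln (lamI lam (Su u)).
Proof.
move=> hu; have L0 := lamI_gt0 hu; set L := lamI lam (Su u).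
have : E (fun f => ln (lam (f u) / (L * marg [set u] f))) <= 0.
  apply: (expect_ln_le0 Pr_gt0 Pr_sum1) => [f fD|].
    by rewrite divr_gt0 ?mulr_gt0 ?(marg_gt0 Pr_gt0).
  rewrite /expect -(eq_bigl _ _ (fun f => andbT (f \in D))).
  rewrite (eq_bigr (fun f => Pr f * (lam (f u) / L) / marg [set u] f)) => [|f _];
    last by rewrite invfM; ring.
  apply: le_trans (sum_div_mass_fibres_le Pr_gt0 (phi := fun i => lam i / L) _ _) _.
  - by move=> i; rewrite divr_ge0 ?ltW.
  - move=> f fD _; apply: (sum_le_marg Pr_gt0) => g gD /eqP /= gf.
    by rewrite agree_set1 gf.
  apply: le_trans (ler_sum_subset (B := Su u) _ _) _.
  - apply/subsetP => i /imsetP[f]; rewrite inE => /andP[fD _] ->.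
    by apply: hF hu; move: fD; rewrite inE => /andP[].
  - by move=> i; rewrite divr_ge0 ?ltW.
  by rewrite -mulr_suml mulfV ?gt_eqF.
rewrite (eq_expect Pr (psi := fun f => ln (lam (f u)) - ln L - ln (marg [set u] f))) => [|f fD].
  by rewrite !expectB (expect_cst Pr_sum1) expect_ln_marg; lra.
by rewrite ln_div ?lnM ?posrE ?mulr_gt0 ?(marg_gt0 Pr_gt0) // opprD addrA.
Qed.

Lemma ln_omega_expect : ln Om =
  \sum_(u | evenv (val u)) E (fun f => ln (lam (f u))) +
  \sum_(v | ~~ evenv (val v)) E (fun f => ln (site_wt (restr f v) (f v))) + H setT.
Proof.
rewrite /entropy -!expect_sum -!expectD -[LHS](expect_cst Pr_sum1).
apply: eq_expect => f fD; have wf : 0 < w f by move: fD; rewrite inE => /andP[].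
rewrite margT // /Pr ln_div ?posrE // weightE lnM ?posrE ?prodr_gt0 // => [|v ov];
  last exact: site_wt_gt0.
rewrite !ln_prod // => [|v _ ov]; last exact: site_wt_gt0.
lra.
Qed.

Lemma even_sites_bound :
  \sum_(u | evenv (val u)) (n_out S (val u))%:R * (E (fun f => ln (lam (f u))) + H [set u])
  <= \sum_(u | has_out_nbr S (val u)) (n_out S (val u))%:R * ln (lamI lam (Su u)).
Proof.
rewrite (bigID (fun u => has_out_nbr S (val u))) /= [X in _ + X]big1 ?addr0; last first.
  move=> u /andP[_ /existsPn inS]; rewrite /n_out (_ : [set k | _] = set0) ?cards0 ?mul0r //.
  by apply/setP => k; rewrite !inE; apply/negbTE/inS.
rewrite (eq_bigl (fun u => has_out_nbr S (val u))) => [|u].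
  by apply: ler_sum => u hu; rewrite ler_wpM2l ?boundary_site_bound.
by rewrite andb_idl // => /(hS (fsvalP u)).
Qed.

Lemma entropy_evens_le : K * H evens <=
  \sum_(u | evenv (val u)) (n_out S (val u))%:R * H [set u] +
  \sum_(v | ~~ evenv (val v)) H (nbhd v).
Proof.
rewrite [leRHS](_ : _ = \sum_w cover_wt R w * H (cover_set w)); last first.
  rewrite sum_cover_wt /cover_set.
  by congr (_ + _); apply: eq_bigr => w; [move=> -> | move=> /negPf ->].
apply: (shearer Pr_gt0 Pr_sum1 (@cover_wt_ge0 d S R) (@cover_set_evens d S)) => e.
by rewrite inE; apply: cover_count.
Qed.

Lemma entropy_chain_odd :
  H setT <= H evens + \sum_(v | ~~ evenv (val v)) (H (v |: nbhd v) - H (nbhd v)).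
Proof.
set odds := [set v : S | ~~ evenv (val v)].
have := entropy_chain_le Pr_gt0 Pr_sum1 (s := enum odds) (B := evens) (N := @nbhd d S).
have -> : evens :|: [set x in enum odds] = setT.
  by apply/setP => x; rewrite !inE mem_enum !inE orbN.
rewrite big_enum /=; under eq_bigl do rewrite inE; apply.
move=> v; rewrite mem_enum inE => ov; apply/subsetP => u /even_nbhd eu.
by rewrite inE eu.
Qed.

Lemma expect_ln_lam_cover :
  \sum_(v | ~~ evenv (val v)) E (fun f => ln (nbr_lam (restr f v))) +
  \sum_(u | evenv (val u)) (n_out S (val u))%:R * E (fun f => ln (lam (f u))) =
  K * \sum_(u | evenv (val u)) E (fun f => ln (lam (f u))).
Proof.
rewrite -sum_cover sum_cover_wt addrC /cover_set; congr (_ + _).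
  by apply: eq_bigr => u ->; rewrite big_set1.
apply: eq_bigr => v /negPf ov; rewrite ov -expect_sum; apply: eq_expect => f fD.
rewrite big_nbhd ?ov // /nbr_lam ln_prod //.
by apply: eq_bigr => k _; rewrite restr_nbr_in.
Qed.

Lemma ln_omega_le : K * ln Om <=
  \sum_(v | ~~ evenv (val v)) \sum_(x <- suppXv v) PXx x * ln (Zx x / PXx x) +
  \sum_(u | has_out_nbr S (val u)) (n_out S (val u))%:R * ln (lamI lam (Su u)).
Proof.
have odd_le := ler_sum (index_enum S) odd_site_bound.
rewrite !big_split -!mulr_sumr /= in odd_le.
have even_le := even_sites_bound.
rewrite (eq_bigr _ (fun u _ => mulrDr _ _ _)) big_split /= in even_le.
have K0 : 0 <= K by rewrite ler0n.
have chain := ler_wpM2l K0 entropy_chain_odd.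
have shearer := entropy_evens_le.
have cover := expect_ln_lam_cover.
rewrite ln_omega_expect !mulrDr; lra.
Qed.

Lemma odd_factor_gt0 :
  0 < \prod_(v | ~~ evenv (val v)) \prod_(x <- suppXv v) (Zx x / PXx x) `^ (K^-1 * PXx x).
Proof. by apply: prodr_gt0 => v ov; apply: prod_powR_gt0 => x xs _; apply: Z_div_PX_gt0. Qed.

Lemma ln_odd_factor :
  ln (\prod_(v | ~~ evenv (val v)) \prod_(x <- suppXv v) (Zx x / PXx x) `^ (K^-1 * PXx x)) =
  K^-1 * \sum_(v | ~~ evenv (val v)) \sum_(x <- suppXv v) PXx x * ln (Zx x / PXx x).
Proof.
rewrite ln_prod => [|v _ ov]; last by apply: prod_powR_gt0 => x xs _; apply: Z_div_PX_gt0.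
rewrite mulr_sumr; apply: eq_bigr => v ov.
rewrite ln_prod_powR => [|x xs _]; last exact: Z_div_PX_gt0.
by rewrite mulr_sumr; apply: eq_bigr => x _; rewrite [RHS]mulrA.
Qed.

End SpinModel.

Unset Implicit Arguments.

Theorem lemma7p3 (R : realType) (Sp : finType) (lam : Sp -> R)
  (lam2 : Sp -> Sp -> R) (d : nat) (hd : (0 < d)%N)
  (hlam : forall i, 0 < lam i) (hlam2 : forall i j, 0 <= lam2 i j)
  (hsym : forall i j, lam2 i j = lam2 j i)
  (S : {fset vtx d}) (hS : even_set S)
  (Su : S -> {set Sp}) (F : {set {ffun S -> Sp}})
  (hF : forall f, f \in F -> forall u : S, has_out_nbr S (val u) -> f u \in Su u)
  (hpos : 0 < omega lam lam2 F)
  (T : S -> eqType) (X : forall v : S, {ffun 'I_d * bool -> Sp} -> T v) :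
  omega lam lam2 F <=
    (\prod_(v : S | ~~ evenv (val v))
       \prod_(x <- suppX lam lam2 F X v)
         (Zpart lam lam2 (Psi lam lam2 F X x) (Iset lam lam2 F X x)
            / PX lam lam2 F X x) `^ ((2 * d)%:R^-1 * PX lam lam2 F X x)) *
    \prod_(u : S | has_out_nbr S (val u))
       (lamI lam (Su u)) `^ ((2 * d)%:R^-1 * (n_out S (val u))%:R).
Proof.
have K0 : 0 < (2 * d)%:R :> R by rewrite ltr0n muln_gt0 hd.
have odd_gt0 := odd_factor_gt0 hlam hlam2 hsym hS hpos X.
have lamI_pos u : u \in index_enum S -> has_out_nbr S (val u) -> 0 < lamI lam (Su u).
  by move=> _; apply: (lamI_gt0 hlam hlam2 hF hpos).
rewrite -ler_ln ?posrE ?mulr_gt0 ?prod_powR_gt0 // lnM ?posrE ?prod_powR_gt0 //.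
rewrite (ln_odd_factor hlam hlam2 hsym hS hpos X) ln_prod_powR //.
under [X in _ + X]eq_bigr do rewrite -mulrA.
rewrite -mulr_sumr -mulrDr -(ler_pM2l K0) mulVKf ?gt_eqF //.
exact: (ln_omega_le hlam hlam2 hsym hS hF hpos X).
Qed.
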